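(* Let $d\ge2$, suppose $\mathcal D\subseteq\mathbb S_1^{d-1}$ has non-empty interior and $\mathcal C\subset\Gamma\backslash G\times(0,1)$ is compact. Then: (i) there exists $\kappa(\mathcal C)>0$ such that $F_{\mathcal D}(M,t)<\kappa(\mathcal C)$ whenever $(\Gamma M,t)\in\mathcal C$; and (ii) $F_{\mathcal D}$ is continuous at every point $(\Gamma M,t)\in\mathcal C$ satisfying $$(\mathbb Z^{d+1}M\setminus\{0\})\cap\partial\big((-t,1-t)\times(0,\kappa(\mathcal C)]\mathcal D\big)=\emptyset.$$
   Context: $G=\mathrm{SL}(d+1,\mathbb R)$, $\Gamma=\mathrm{SL}(d+1,\mathbb Z)$, $\Gamma\backslash G$ with the quotient topology. Row vectors in $\mathbb R^{d+1}$ are written $(u,\vec v)$, $u\in\mathbb R$, $\vec v\in\mathbb R^d$; $\mathbb Z^{d+1}M=\{\vec mM:\vec m\in\mathbb Z^{d+1}\}$. For $t\in(0,1)$, $\mathcal Q_{\mathcal D}(M,t)=\{(u,\vec v)\in\mathbb Z^{d+1}M:-t<u<1-t,\ \vec v\in\mathbb R_{>0}\mathcal D\}$ and $F_{\mathcal D}(M,t)=\min\{|\vec v|:(u,\vec v)\in\mathcal Q_{\mathcal D}(M,t)\}$; this is a well-defined positive function on $\Gamma\backslash G\times(0,1)$. For $r>0$, $(0,r]\mathcal D=\{s\vec x: 0<s\le r,\ \vec x\in\mathcal D\}$; $\partial$ denotes topological boundary in $\mathbb R^{d+1}$. *)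

From HB Require Import structures.
From mathcomp Require Import all_boot all_order all_algebra.
From mathcomp Require Import all_classical all_reals all_analysis.
Set Implicit Arguments. Unset Strict Implicit. Unset Printing Implicit Defensive.
Import Order.TTheory GRing.Theory Num.Theory.
Import numFieldNormedType.Exports.
Local Open Scope classical_set_scope.
Local Open Scope ring_scope.

Section Defs.
Variable R : realType.
Variable d : nat.

Definition enorm (n : nat) (v : 'rV[R]_n) : R :=
  Num.sqrt (\sum_(j < n) (v 0 j) ^+ 2).

Definition sphere : set 'rV[R]_d := [set v | enorm v = 1].

Definition nonempty_sphere_interior (D : set 'rV[R]_d) : Prop :=
  exists v, D v /\ exists2 e : R, 0 < e &
    forall w, sphere w -> enorm (w - v) < e -> D w.

Definition SL : set 'M[R]_(d.+1) := [set M | \det M = 1].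

Definition intvec : set 'rV[R]_(d.+1) := [set m | forall j, m 0 j \is a Num.int].

Definition Gamma : set 'M[R]_(d.+1) :=
  [set g | \det g = 1 /\ forall i j, g i j \is a Num.int].

Definition lattice (M : 'M[R]_(d.+1)) : set 'rV[R]_(d.+1) :=
  [set m *m M | m in intvec].

Definition ucomp (x : 'rV[R]_(d.+1)) : R := x 0 ord0.
Definition vcomp (x : 'rV[R]_(d.+1)) : 'rV[R]_d := \row_(j < d) x 0 (lift ord0 j).

Definition cone (D : set 'rV[R]_d) : set 'rV[R]_d :=
  [set v | exists s : R, 0 < s /\ exists2 x, D x & v = s *: x].

Definition trunc_cone (r : R) (D : set 'rV[R]_d) : set 'rV[R]_d :=
  [set v | exists s : R, (0 < s /\ s <= r) /\ exists2 x, D x & v = s *: x].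

Definition QD (D : set 'rV[R]_d) (M : 'M[R]_(d.+1)) (t : R) : set 'rV[R]_(d.+1) :=
  [set x | lattice M x /\ - t < ucomp x < 1 - t /\ cone D (vcomp x)].

(* F_D(M,t) = min { |v| : (u,v) in Q_D(M,t) } (taken as the infimum) *)
Definition FD (D : set 'rV[R]_d) (p : 'M[R]_(d.+1) * R) : R :=
  inf [set enorm (vcomp x) | x in QD D p.1 p.2].

Definition slab (r t : R) (D : set 'rV[R]_d) : set 'rV[R]_(d.+1) :=
  [set x | - t < ucomp x < 1 - t /\ trunc_cone r D (vcomp x)].

Definition boundary (A : set 'rV[R]_(d.+1)) : set 'rV[R]_(d.+1) :=
  closure A `\` interior A.

Definition X : set ('M[R]_(d.+1) * R) := [set p | SL p.1 /\ 0 < p.2 < 1].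

(* Gamma-invariant subsets of G x (0,1): subsets of Gamma\G x (0,1) *)
Definition Ginv (U : set ('M[R]_(d.+1) * R)) : Prop :=
  U `<=` X /\ forall g M t, Gamma g -> U (M, t) -> U (g *m M, t).

(* open sets of Gamma\G x (0,1) (quotient topology x usual topology),
   represented by their (saturated) preimages in G x (0,1) *)
Definition qopen (U : set ('M[R]_(d.+1) * R)) : Prop :=
  Ginv U /\ exists O : set ('M[R]_(d.+1) * R), open O /\ U = O `&` X.

Definition qcompact (C : set ('M[R]_(d.+1) * R)) : Prop :=
  Ginv C /\ forall (I : Type) (U : I -> set ('M[R]_(d.+1) * R)),
    (forall i, qopen (U i)) -> C `<=` \bigcup_i U i ->
    exists (n : nat) (f : 'I_n -> I), C `<=` \bigcup_k U (f k).

Definition qcontinuous_at (f : 'M[R]_(d.+1) * R -> R) (p : 'M[R]_(d.+1) * R) : Prop :=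
  forall e : R, 0 < e -> exists U, qopen U /\ U p /\ forall q, U q -> `|f q - f p| < e.

End Defs.

(* Near any point (M, t), a pigeonhole (Dirichlet) argument yields a lattice
   vector of Z^{d+1} M whose first coordinate lies in (-t, 1 - t) and whose last
   d coordinates lie strictly inside the cone over D.  Both conditions are open,
   so F_D is locally bounded, hence bounded on compact subsets of
   Gamma\G x (0,1); this gives (i).
   For (ii), a near-minimal vector of Q_D(M, t) lies in the interior of the slab
   (-t, 1 - t) x (0, kappa] D, so it persists under small perturbations of
   (M, t): F_D is upper semicontinuous.  Conversely, the short vectors of
   Q_D(M', t') for (M', t') near (M, t) have coefficient vectors in a fixed
   finite set; each corresponding lattice point of M lies uniformly inside the
   slab or outside its closure, so a short vector of Q_D(M', t') yields a vector
   of Q_D(M, t) almost as short: F_D is lower semicontinuous. *)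

From HB Require Import structures.
From mathcomp Require Import all_boot all_order all_algebra.
From mathcomp Require Import all_classical all_reals all_analysis.
From mathcomp Require Import ring lra zify.
Set Implicit Arguments. Unset Strict Implicit. Unset Printing Implicit Defensive.
Import Order.TTheory GRing.Theory Num.Theory.
Import numFieldNormedType.Exports.
Local Open Scope classical_set_scope.
Local Open Scope ring_scope.

Section Norms.
Variable R : realType.
Implicit Types n : nat.

Definition l1norm n (v : 'rV[R]_n) : R := \sum_(j < n) `|v 0 j|.

Definition mxl1norm m n (A : 'M[R]_(m, n)) : R := \sum_i \sum_j `|A i j|.

Lemma l1norm_ge0 n (v : 'rV[R]_n) : 0 <= l1norm v.
Proof. exact: sumr_ge0. Qed.

Lemma coord_le_l1norm n (v : 'rV[R]_n) j : `|v 0 j| <= l1norm v.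
Proof. by rewrite /l1norm (bigD1 j) //= lerDl sumr_ge0. Qed.

Lemma l1normD n (v w : 'rV[R]_n) : l1norm (v + w) <= l1norm v + l1norm w.
Proof. by rewrite /l1norm -big_split /=; apply: ler_sum => j _; rewrite mxE ler_normD. Qed.

Lemma l1norm_le n (v : 'rV[R]_n) B : (forall j, `|v 0 j| <= B) -> l1norm v <= n%:R * B.
Proof.
move=> vB; apply: le_trans (ler_sum _ (fun j _ => vB j)) _.
by rewrite sumr_const card_ord mulr_natl.
Qed.

Lemma mxl1norm_ge0 m n (A : 'M[R]_(m, n)) : 0 <= mxl1norm A.
Proof. by apply: sumr_ge0 => i _; exact: sumr_ge0. Qed.

Lemma row_sum_le_mxl1norm m n (A : 'M[R]_(m, n)) i : \sum_j `|A i j| <= mxl1norm A.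
Proof. by rewrite /mxl1norm (bigD1 i) //= lerDl; apply: sumr_ge0 => k _; exact: sumr_ge0. Qed.

Lemma col_sum_le_mxl1norm m n (A : 'M[R]_(m, n)) j : \sum_i `|A i j| <= mxl1norm A.
Proof.
apply: ler_sum => i _.
by rewrite [leRHS](bigD1 j) //= lerDl; apply: sumr_ge0.
Qed.

Lemma entry_le_mxl1norm m n (A : 'M[R]_(m, n)) i j : `|A i j| <= mxl1norm A.
Proof.
apply: le_trans (row_sum_le_mxl1norm A i).
by rewrite (bigD1 j) //= lerDl; apply: sumr_ge0.
Qed.

Lemma mulmx_entry_le m n p (A : 'M[R]_(m, n)) (B : 'M[R]_(n, p)) c i j :
  (forall k l, `|B k l| <= c) -> `|(A *m B) i j| <= (\sum_k `|A i k|) * c.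
Proof.
move=> Bc; rewrite mxE mulr_suml; apply: le_trans (ler_norm_sum _ _ _) _.
by apply: ler_sum => k _; rewrite normrM ler_wpM2l.
Qed.

Lemma row_mulmx_perturb m n (v : 'rV[R]_m) (A B : 'M[R]_(m, n)) r :
  (forall i j, `|B i j - A i j| < r) -> forall j, `|(v *m B - v *m A) 0 j| <= l1norm v * r.
Proof.
by move=> BA j; rewrite -mulmxBr; apply: mulmx_entry_le => k l; rewrite !mxE; exact: ltW.
Qed.

Lemma sumsqr_ge0 n (v : 'rV[R]_n) : 0 <= \sum_(j < n) v 0 j ^+ 2.
Proof. by apply: sumr_ge0 => j _; exact: sqr_ge0. Qed.

Lemma enorm_ge0 n (v : 'rV[R]_n) : 0 <= enorm v.
Proof. exact: sqrtr_ge0. Qed.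

Lemma enorm_sqr n (v : 'rV[R]_n) : enorm v ^+ 2 = \sum_(j < n) v 0 j ^+ 2.
Proof. by rewrite /enorm sqr_sqrtr // sumsqr_ge0. Qed.

Lemma enormZ n (a : R) (v : 'rV[R]_n) : enorm (a *: v) = `|a| * enorm v.
Proof.
rewrite /enorm (eq_bigr (fun j => a ^+ 2 * v 0 j ^+ 2)) => [|j _]; last first.
  by rewrite mxE exprMn.
by rewrite -mulr_sumr sqrtrM ?sqr_ge0 // sqrtr_sqr.
Qed.

Lemma enorm0 n : enorm (0 : 'rV[R]_n) = 0.
Proof. by rewrite -(scale0r 0) enormZ normr0 mul0r. Qed.

Lemma enormN n (v : 'rV[R]_n) : enorm (- v) = enorm v.
Proof. by rewrite -scaleN1r enormZ normrN normr1 mul1r. Qed.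

Lemma enorm_distC n (v w : 'rV[R]_n) : enorm (v - w) = enorm (w - v).
Proof. by rewrite -enormN opprB. Qed.

Lemma coord_le_enorm n (v : 'rV[R]_n) j : `|v 0 j| <= enorm v.
Proof.
rewrite -sqrtr_sqr ler_sqrt ?sumsqr_ge0 // (bigD1 j) //= lerDl.
by apply: sumr_ge0 => i _; exact: sqr_ge0.
Qed.

Lemma enorm_le_l1norm n (v : 'rV[R]_n) : enorm v <= l1norm v.
Proof.
rewrite -(ger0_norm (l1norm_ge0 v)) -sqrtr_sqr ler_sqrt ?sqr_ge0 //.
pose K (a b : R) := 0 <= b /\ a <= b ^+ 2.
suff [] : K (\sum_j v 0 j ^+ 2) (l1norm v) by [].
apply: (big_ind2 K) => [|a1 a2 b1 b2 [b10 ab1] [b20 ab2]|j _].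
- by split; rewrite ?expr0n.
- by split; [exact: addr_ge0 | rewrite sqrrD; nra].
- by split; rewrite ?real_normK ?num_real.
Qed.

Lemma enorm_le n (v : 'rV[R]_n) B : (forall j, `|v 0 j| <= B) -> enorm v <= n%:R * B.
Proof. by move=> vB; exact: le_trans (enorm_le_l1norm v) (l1norm_le vB). Qed.

Lemma dot_le_enorm n (v w : 'rV[R]_n) :
  \sum_j v 0 j * w 0 j <= enorm v * enorm w.
Proof.
set a := \sum_j v 0 j ^+ 2; set b := \sum_j w 0 j ^+ 2; set c := \sum_j v 0 j * w 0 j.
have a0 : 0 <= a := sumsqr_ge0 v.
have b0 : 0 <= b := sumsqr_ge0 w.
have quad_ge0 l : 0 <= a - 2 * l * c + l ^+ 2 * b.
  have -> : a - 2 * l * c + l ^+ 2 * b = \sum_j (v 0 j - l * w 0 j) ^+ 2.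
    rewrite /a /b /c !mulr_sumr -sumrN -!big_split /=.
    by apply: eq_bigr => j _; ring.
  by apply: sumr_ge0 => j _; exact: sqr_ge0.
suff c2 : c ^+ 2 <= a * b.
  apply: le_trans (ler_norm c) _.
  by rewrite -sqrtr_sqr -sqrtrM // ler_sqrt // mulr_ge0.
have [b_eq0 | b_neq0] := eqVneq b 0.
  have w0 j : w 0 j = 0.
    apply/eqP; rewrite -sqrf_eq0; apply/eqP.
    by apply: (psumr_eq0P (P := predT) (F := fun j => w 0 j ^+ 2)) => // i _; exact: sqr_ge0.
  by rewrite /c big1 => [|j _]; rewrite ?w0 ?mulr0 // expr0n mulr_ge0.
have b_gt0 : 0 < b by rewrite lt_def b_neq0.
(* the quadratic in [l] is nonnegative at its minimum [l = c / b] *)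
have := quad_ge0 (c / b).
have -> : a - 2 * (c / b) * c + (c / b) ^+ 2 * b = (a * b - c ^+ 2) / b by field.
by rewrite pmulr_lge0 ?invr_gt0 // subr_ge0.
Qed.

Lemma enormD n (v w : 'rV[R]_n) : enorm (v + w) <= enorm v + enorm w.
Proof.
have s0 := addr_ge0 (enorm_ge0 v) (enorm_ge0 w).
rewrite [leLHS]/enorm -(ger0_norm s0) -sqrtr_sqr ler_sqrt ?sqr_ge0 //.
have -> : \sum_j (v + w) 0 j ^+ 2 =
    \sum_j v 0 j ^+ 2 + 2 * \sum_j v 0 j * w 0 j + \sum_j w 0 j ^+ 2.
  by rewrite mulr_sumr -!big_split /=; apply: eq_bigr => j _; rewrite !mxE; ring.
rewrite sqrrD -!enorm_sqr.
have := dot_le_enorm v w; move: (\sum_j _) => c; nra.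
Qed.

End Norms.

Section Cones.
Variables (R : realType) (d : nat) (D : set 'rV[R]_d).

Lemma trunc_cone_sub_cone r : trunc_cone r D `<=` cone D.
Proof. by move=> v [s [[s0 _] Dv]]; exists s. Qed.

Hypothesis D_sphere : D `<=` @sphere R d.

Lemma enorm_scale_sphere s w : D w -> 0 < s -> enorm (s *: w) = s.
Proof. by move=> /D_sphere w1 s0; rewrite enormZ w1 mulr1 gtr0_norm. Qed.

Lemma cone_neq0 v : cone D v -> v != 0.
Proof.
case=> s [s0 [w Dw ->]]; apply/eqP => sw0.
by move: (enorm_scale_sphere Dw s0); rewrite sw0 enorm0 => s_eq; rewrite -s_eq ltxx in s0.
Qed.

Lemma cone_trunc_cone r v : cone D v -> enorm v <= r -> trunc_cone r D v.
Proof.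
by case=> s [s0 [w Dw ->]]; rewrite enorm_scale_sphere // => sr; exists s; split => //; exists w.
Qed.

Variables (v0 : 'rV[R]_d) (c : R).
Hypotheses (v0_sphere : sphere v0) (c_le1 : c <= 1).
Hypothesis cap_sub : forall w, sphere w -> enorm (w - v0) < 2 * c -> D w.

Lemma cone_near_ray l v : 0 < l -> enorm (v - l *: v0) < l * c -> cone D v.
Proof.
move=> l0 vE; set E := enorm (v - l *: v0) in vE.
have lv0 : enorm (l *: v0) = l by rewrite enormZ v0_sphere mulr1 gtr0_norm.
have v_le : enorm v <= E + l by have := enormD (v - l *: v0) (l *: v0); rewrite subrK lv0.
have l_le : l <= E + enorm v.
  by have := enormD (l *: v0 - v) v; rewrite subrK lv0 enorm_distC.
set nv := enorm v in v_le l_le.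
have lc_le : l * c <= l := ler_piMr (ltW l0) c_le1.
have nv0 : 0 < nv by lra.
have [nv_neq0 l_neq0] : nv != 0 /\ l != 0 by rewrite !gt_eqF.
exists nv; split => //; exists (nv^-1 *: v); last by rewrite scalerA mulfV // scale1r.
apply: cap_sub; first by rewrite /sphere /= enormZ gtr0_norm ?invr_gt0 // mulVf.
have -> : nv^-1 *: v - v0 = l^-1 *: (v - l *: v0) + (nv^-1 - l^-1) *: v.
  by apply/matrixP => i j; rewrite !mxE; field; apply/andP.
apply: le_lt_trans (enormD _ _) _; rewrite !enormZ -/E -/nv gtr0_norm ?invr_gt0 //.
have -> : `|nv^-1 - l^-1| * nv = `|l - nv| / l.
  have -> : nv^-1 - l^-1 = (l - nv) / (nv * l) by field; apply/andP.
  by rewrite normrM normfV (gtr0_norm (mulr_gt0 nv0 l0)); field; apply/andP.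
have lnv : `|l - nv| <= E by rewrite ler_norml; apply/andP; split; lra.
have E_lt : l^-1 * E < c by rewrite ltr_pdivrMl.
have lnv_lt : `|l - nv| / l < c by rewrite ltr_pdivrMr //; lra.
lra.
Qed.

End Cones.

Section Unimodular.
Variables (R : realType) (d : nat).
Implicit Types g h M : 'M[R]_d.+1.

Lemma det_mxOver (S : subringClosed R) n (A : 'M[R]_n) : A \is a mxOver S -> \det A \in S.
Proof.
move=> /mxOverP AS; apply: rpred_sum => s _.
by rewrite rpredM ?rpred_prod ?rpredX ?rpredN1.
Qed.

Lemma adj_mxOver (S : subringClosed R) n (A : 'M[R]_n) :
  A \is a mxOver S -> \adj A \is a mxOver S.
Proof.
move=> /mxOverP AS; apply/mxOverP => i j; rewrite mxE /cofactor.
by rewrite rpredM ?rpredX ?rpredN1 // det_mxOver //; apply/mxOverP => k l; rewrite !mxE.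
Qed.

Lemma intvecP (m : 'rV[R]_d.+1) : intvec m <-> m \is a mxOver Num.int.
Proof. by split => [mZ|/mxOverP mZ j //]; apply/mxOverP => i j; rewrite (ord1 i). Qed.

Lemma Gamma_mxOver g : Gamma g -> g \is a mxOver (@Num.int R).
Proof. by case=> _ gZ; apply/mxOverP. Qed.

Lemma Gamma_unit g : Gamma g -> g \in unitmx.
Proof. by case=> g1 _; rewrite unitmxE g1 unitr1. Qed.

Lemma Gamma1 : Gamma (1%:M : 'M[R]_d.+1).
Proof. by split; [rewrite det1 | move=> i j; rewrite mxE; case: (i == j)]. Qed.

Lemma Gamma_mul g h : Gamma g -> Gamma h -> Gamma (g *m h).
Proof.
move=> Gg Gh; split; first by rewrite det_mulmx Gg.1 Gh.1 mulr1.
by apply/mxOverP; rewrite mxOverM ?Gamma_mxOver.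
Qed.

Lemma Gamma_invmx g : Gamma g -> Gamma (invmx g).
Proof.
move=> Gg; split; first by rewrite det_inv Gg.1 invr1.
have -> : invmx g = \adj g by rewrite /invmx Gamma_unit // Gg.1 invr1 scale1r.
by apply/mxOverP; rewrite adj_mxOver ?Gamma_mxOver.
Qed.

Lemma lattice_mulmx_sub g M : g \is a mxOver Num.int -> lattice (g *m M) `<=` lattice M.
Proof.
move=> gZ _ [m /intvecP mZ <-]; exists (m *m g); last by rewrite mulmxA.
by apply/intvecP; rewrite mxOverM.
Qed.

Lemma lattice_Gamma g M : Gamma g -> lattice (g *m M) = lattice M.
Proof.
move=> Gg; apply/seteqP; split; first exact/lattice_mulmx_sub/Gamma_mxOver.
rewrite -{1}[M](mulKmx (Gamma_unit Gg)).
exact/lattice_mulmx_sub/Gamma_mxOver/Gamma_invmx.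
Qed.

Lemma X_unit M t : X (M, t) -> M \in unitmx.
Proof. by case=> SM _; rewrite unitmxE SM unitr1. Qed.

Lemma X_Gamma g M t : Gamma g -> X (M, t) -> X (g *m M, t).
Proof. by move=> Gg [SM t01]; split => //; rewrite /SL /= det_mulmx Gg.1 mul1r. Qed.

End Unimodular.

Section Neighbourhoods.
Variable R : realType.

Lemma near0_mulr_lt (K T : R) : 0 < T -> \forall r \near 0^'+, K * r < T.
Proof.
move=> T0; have K1 : 0 < `|K| + 1 by rewrite ltr_wpDl.
near=> r.
have r0 : 0 < r by near: r; exact: nbhs_right_gt.
have rT : r < T / (`|K| + 1) by near: r; apply: nbhs_right_lt; rewrite divr_gt0.
apply: le_lt_trans (ler_norm _) _; rewrite normrM (gtr0_norm r0).
apply: le_lt_trans (_ : (`|K| + 1) * r < T); last by rewrite mulrC -ltr_pdivlMr.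
by rewrite ler_pM2r // lerDl.
Unshelve. all: by end_near.
Qed.

Lemma ball_rowP n (x z : 'rV[R]_n) r : ball x r z <-> 0 < r /\ forall j, `|x 0 j - z 0 j| < r.
Proof.
split=> [[r0 xz]|[r0 xz]]; split=> //; first by move=> j; exact: xz.
by move=> i j; rewrite (ord1 i); exact: xz.
Qed.

Lemma near0_ball_sub (T : pseudoMetricType R) (x : T) (P : set T) :
  nbhs x P -> \forall e \near 0^'+, ball x e `<=` P.
Proof.
move=> /nbhs_ballP [r r0 sub]; near=> e; apply: subset_trans sub; apply: le_ball.
by apply: ltW; near: e; exact: nbhs_right_lt.
Unshelve. all: by end_near.
Qed.

Lemma not_boundary_near (T : topologicalType) (A : set T) x :
  ~ (closure A `\` interior A) x -> (\forall z \near x, A z) \/ (\forall z \near x, ~ A z).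
Proof.
move=> not_bd; have [Aix|nAix] := pselect (interior A x); [by left | right].
suff : interior (~` A) x by [].
by rewrite interiorC => cAx; apply: not_bd.
Qed.

End Neighbourhoods.

Section QuotientTopology.
Variables (R : realType) (d : nat).
Local Notation point := ('M[R]_d.+1 * R)%type.

Definition Gamma_invariant (f : point -> R) :=
  forall g q, Gamma g -> f (g *m q.1, q.2) = f q.

Lemma FD_Gamma_invariant (D : set 'rV[R]_d) : Gamma_invariant (FD D).
Proof. by move=> g [M t] Gg; rewrite /FD /QD /= lattice_Gamma. Qed.

Lemma ball_pointP (p q : point) r : ball p r q <->
  0 < r /\ (forall i j, `|p.1 i j - q.1 i j| < r) /\ `|p.2 - q.2| < r.
Proof. by split => [[[r0 pq1] pq2] | [r0 [pq1 pq2]]]. Qed.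

Lemma near_point_entries (p : point) (P : set point) :
  (\forall r \near 0^'+, forall q : point,
     (forall i j, `|q.1 i j - p.1 i j| < r) -> `|q.2 - p.2| < r -> P q) ->
  \forall q \near p, P q.
Proof.
move=> Pnear; have [r [r0 Pr]] := filter_ex (filterI (nbhs_right_gt 0) Pnear).
apply/nbhs_ballP; exists r => // q /ball_pointP [_ [pq1 pq2]].
by apply: Pr => [i j|]; rewrite distrC.
Qed.

Definition Gamma_ball (p : point) r : set point :=
  [set q | X q /\ exists2 g, Gamma g & ball p r (g *m q.1, q.2)].

Lemma Gamma_ball_center p r : X p -> 0 < r -> Gamma_ball p r p.
Proof.
move=> Xp r0; split => //; exists 1%:M; first exact: Gamma1.
by rewrite mul1mx -surjective_pairing; exact: ballxx.
Qed.

Lemma open_ball_sub (p q : point) r : ball p r q -> exists2 e, 0 < e & ball q e `<=` ball p r.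
Proof.
by move=> /(ball_open p r)/nbhs_ballP [e e0 sub]; exists e.
Qed.

Lemma qopen_Gamma_ball p r : qopen (Gamma_ball p r).
Proof.
split.
  split=> [q []//|h M t Gh [XM [g Gg b]]]; split; first exact: X_Gamma.
  exists (g *m invmx h); first exact/Gamma_mul/Gamma_invmx.
  by rewrite /= mulmxA mulmxKV ?Gamma_unit.
exists [set q | exists2 g, Gamma g & ball p r (g *m q.1, q.2)].
split; last by apply/seteqP; split => q /= [].
rewrite openE => q [g Gg /open_ball_sub [e e0 sub]].
have S0 := mxl1norm_ge0 g; have S1 : 0 < mxl1norm g + 1 by rewrite ltr_wpDl.
apply/nbhs_ballP; exists (e / (mxl1norm g + 1)); first exact: divr_gt0.
move=> q' /ball_pointP [_ [qq1 qq2]]; exists g => //; apply: sub.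
apply/ball_pointP; split => //; split => [i j|]; last first.
  by apply: lt_le_trans qq2 _; rewrite ler_pdivrMr // ler_peMr ?lerDr // ltW.
have -> : (g *m q.1) i j - (g *m q'.1) i j = (g *m (q.1 - q'.1)) i j.
  by rewrite mulmxBr !mxE.
apply: le_lt_trans (mulmx_entry_le (c := e / (mxl1norm g + 1)) g i j _) _.
  by move=> k l; rewrite !mxE; exact: ltW.
rewrite mulrA ltr_pdivrMr // mulrC ltr_pM2l //.
by apply: le_lt_trans (row_sum_le_mxl1norm g i) _; rewrite ltrDl.
Qed.

Lemma qopen_near (f : point -> R) (P : R -> Prop) p :
  X p -> Gamma_invariant f -> (\forall q \near p, P (f q)) ->
  exists U, [/\ qopen U, U p & forall q, U q -> P (f q)].
Proof.
move=> Xp finv /nbhs_ballP [r r0 sub]; exists (Gamma_ball p r).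
split; [exact: qopen_Gamma_ball | exact: Gamma_ball_center |].
by move=> q [_ [g Gg /sub]] /=; rewrite finv.
Qed.

Lemma qcontinuous_at_near (f : point -> R) p : X p -> Gamma_invariant f ->
  (forall e, 0 < e -> \forall q \near p, `|f q - f p| < e) -> qcontinuous_at f p.
Proof.
move=> Xp finv fnear e e0.
have [U [Uo Up UP]] := qopen_near (P := fun y => `|y - f p| < e) Xp finv (fnear e e0).
by exists U.
Qed.

Lemma qcompact_ub (f : point -> R) C : qcompact C -> Gamma_invariant f ->
  (forall p, X p -> exists K, \forall q \near p, f q < K) ->
  exists K, forall p, C p -> f p < K.
Proof.
move=> [[CX _] Ccover] finv fnear.
pose I := {p : point | X p}.
have locU (i : I) : exists KU : R * set point,
    qopen KU.2 /\ KU.2 (sval i) /\ forall q, KU.2 q -> f q < KU.1.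
  have [K fK] := fnear _ (svalP i).
  by have [U [] *] := qopen_near (P := fun y => y < K) (svalP i) finv fK; exists (K, U).
have [KU KUP] := choice locU.
have [|n [k Ck]] := Ccover I (fun i => (KU i).2) (fun i => (KUP i).1).
  by move=> p Cp; exists (exist _ p (CX p Cp)) => //; have [_ []] := KUP (exist _ p (CX p Cp)).
exists (\sum_(j < n) `|(KU (k j)).1| + 1) => p /Ck [j _ Up].
have [_ [_ fK]] := KUP (k j); apply: lt_le_trans (fK p Up) _.
apply: le_trans (ler_norm _) _; rewrite (bigD1 j) //= -addrA lerDl.
by rewrite addr_ge0 // sumr_ge0.
Qed.

End QuotientTopology.

Section RowComponents.
Variables (R : realType) (d : nat).
Implicit Types x y : 'rV[R]_d.+1.

Definition uv_row (u : R) (w : 'rV[R]_d) : 'rV[R]_d.+1 :=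
  \row_j (if unlift ord0 j is Some j' then w 0 j' else u).

Lemma ucomp_uv u w : ucomp (uv_row u w) = u.
Proof. by rewrite /ucomp mxE unlift_none. Qed.

Lemma vcomp_uv u w : vcomp (uv_row u w) = w.
Proof. by apply/matrixP => i j; rewrite !mxE liftK (ord1 i). Qed.

Lemma uv_row0_coord_le u j : `|uv_row u 0 0 j| <= `|u|.
Proof. by rewrite mxE; case: unlift => [j'|//]; rewrite mxE normr0. Qed.

Lemma ucompD x y : ucomp (x + y) = ucomp x + ucomp y.
Proof. by rewrite /ucomp mxE. Qed.

Lemma ucompB x y : ucomp (x - y) = ucomp x - ucomp y.
Proof. by rewrite /ucomp !mxE. Qed.

Lemma vcompD x y : vcomp (x + y) = vcomp x + vcomp y.
Proof. by apply/matrixP => i j; rewrite !mxE. Qed.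

Lemma vcompB x y : vcomp (x - y) = vcomp x - vcomp y.
Proof. by apply/matrixP => i j; rewrite !mxE. Qed.

Lemma vcomp0 : vcomp (0 : 'rV[R]_d.+1) = 0.
Proof. by apply/matrixP => i j; rewrite !mxE. Qed.

Lemma enorm_vcomp_le x B : (forall j, `|x 0 j| <= B) -> enorm (vcomp x) <= d%:R * B.
Proof. by move=> xB; apply: enorm_le => j; rewrite mxE. Qed.

Lemma coord_le_uv x j : `|x 0 j| <= `|ucomp x| + enorm (vcomp x).
Proof.
case: (unliftP ord0 j) => [j'|] ->; last by rewrite lerDl enorm_ge0.
by have := coord_le_enorm (vcomp x) j'; rewrite mxE => /le_trans; apply; rewrite lerDr.
Qed.

Lemma coord_le_strip x t j :
  - t < ucomp x < 1 - t -> `|x 0 j| <= `|t| + 1 + enorm (vcomp x).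
Proof.
move=> /andP[lo hi]; apply: le_trans (coord_le_uv x j) _; rewrite lerD2r.
have /andP[t_lo t_hi] : - `|t| <= t <= `|t| by rewrite -ler_norml.
by rewrite ler_norml; apply/andP; split; lra.
Qed.

Lemma coord_dist_shift x y s j :
  `|x 0 j - (y + uv_row s 0) 0 j| <= `|(x - y) 0 j| + `|s|.
Proof.
rewrite [(y + _) 0 j]mxE [(x - y) 0 j]mxE [(- y) 0 j]mxE opprD addrA.
by apply: le_trans (ler_normD _ _) _; rewrite normrN lerD2l uv_row0_coord_le.
Qed.

Lemma slab_shift (D : set 'rV[R]_d) r t t' x :
  slab r t D (x + uv_row (t' - t) 0) <-> slab r t' D x.
Proof.
rewrite /slab /= ucompD vcompD ucomp_uv vcomp_uv addr0.
by split=> -[/andP[lo hi] Tx]; split => //; apply/andP; split; lra.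
Qed.

End RowComponents.

Section LatticePoints.
Variables (R : realType) (d : nat).

Lemma lattice_point_near (M : 'M[R]_d.+1) y : M \in unitmx ->
  exists2 m, intvec m & forall j, `|(m *m M - y) 0 j| <= mxl1norm M.
Proof.
move=> Mu; set a := y *m invmx M.
have floor_dist (x : R) : `|(Num.floor x)%:~R - x| <= 1.
  have /andP[lo hi] := floor_itv x; rewrite intrD (_ : 1%:~R = 1) // in hi.
  by rewrite ler_norml; apply/andP; split; lra.
exists (\row_i (Num.floor (a 0 i))%:~R) => [j|j]; first by rewrite mxE intr_int.
rewrite -[y in _ - y](mulmxKV Mu) -mulmxBl mxE.
apply: le_trans (ler_norm_sum _ _ _) (le_trans _ (col_sum_le_mxl1norm M j)).
by apply: ler_sum => i _; rewrite normrM ler_piMl // !mxE; exact: floor_dist.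
Qed.

Lemma pigeonhole_close (n : nat) (S w : R) (u : 'I_n.+2 -> R) :
  0 < w -> 2 * S / w < n.+1%:R -> (forall k, `|u k| <= S) ->
  exists j k : 'I_n.+2, (j < k)%N /\ `|u k - u j| < w.
Proof.
move=> w0 Sw uS; pose x k := (u k + S) / w.
have x_ge0 k : 0 <= x k.
  apply: divr_ge0; last exact: ltW.
  by have := uS k; rewrite ler_norml => /andP[lo hi]; lra.
have x_lt k : x k < n.+1%:R.
  apply: le_lt_trans Sw; rewrite ler_pM2r ?invr_gt0 //.
  by have := uS k; rewrite ler_norml => /andP[lo hi]; lra.
pose box k : 'I_n.+1 := inord (Num.truncn (x k)).
have boxE k : box k = Num.truncn (x k) :> nat by rewrite inordK // truncn_lt_nat ?x_lt.
have [j [k [jk box_jk]]] : exists j k, j != k /\ box j = box k.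
  have /injectivePn [j [k jk box_jk]] : ~~ injectiveb box.
    by apply/negP => /injectiveP box_inj; have := leq_card box box_inj; rewrite !card_ord ltnn.
  by exists j, k.
have x_close : `|x k - x j| < 1.
  have /andP[jlo jhi] := truncn_itv (x_ge0 j); have /andP[klo khi] := truncn_itv (x_ge0 k).
  rewrite -!boxE box_jk in jlo jhi; rewrite -!boxE in klo khi.
  rewrite -addn1 natrD in jhi khi.
  by rewrite ltr_norml; apply/andP; split; lra.
have u_close : `|u k - u j| < w.
  have -> : u k - u j = (x k - x j) * w by rewrite /x; field; rewrite gt_eqF.
  by rewrite normrM (gtr0_norm w0) gtr_pMl.
case: (ltngtP j k) => [lt_jk | lt_kj | /val_inj eq_jk]; first by exists j, k.
  by exists k, j; rewrite distrC.
by rewrite eq_jk eqxx in jk.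
Qed.

Lemma lattice_point_near_ray (M : 'M[R]_d.+1) (v0 : 'rV[R]_d) (del c : R) :
  M \in unitmx -> 0 < del -> 0 < c ->
  exists2 m, intvec m & exists2 l, 0 < l &
    `|ucomp (m *m M)| < del /\ enorm (vcomp (m *m M) - l *: v0) < l * c.
Proof.
move=> Mu del0 c0; set S := mxl1norm M; have S0 : 0 <= S := mxl1norm_ge0 M.
(* Rounding the ray points [k A v0] to the lattice costs at most [2 d S] in the
   v-coordinate, which is below [A c]. *)
set A := (2 * d%:R * S + 1) / c.
have A0 : 0 < A by rewrite divr_gt0 // ltr_wpDl // !mulr_ge0.
have Ac : A * c = 2 * d%:R * S + 1 by rewrite mulfVK ?gt_eqF.
set N := Num.truncn (2 * S / del).
pose y (k : 'I_N.+2) := uv_row 0 ((k%:R * A) *: v0).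
have near_yk k : exists m, intvec m /\ forall j, `|(m *m M - y k) 0 j| <= S.
  by have [m] := lattice_point_near (y k) Mu; exists m.
have [m mP] := choice near_yk.
have mZ k := (mP k).1; have mS k := (mP k).2.
pose u k := ucomp (m k *m M).
have uS k : `|u k| <= S.
  by have := mS k ord0; rewrite (_ : _ 0 ord0 = ucomp (m k *m M - y k)) // ucompB ucomp_uv subr0.
have [j [k [jk ujk]]] := pigeonhole_close del0 (truncnS_gt _) uS.
have jk_le : (j.+1%:R : R) <= k%:R by rewrite ler_nat.
have kj1 : 1 <= k%:R - j%:R :> R by rewrite -natr1 in jk_le; lra.
exists (m k - m j) => [i|]; first by rewrite !mxE rpredB ?(mZ k i) ?(mZ j i).
exists ((k%:R - j%:R) * A); first by apply: mulr_gt0 => //; lra.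
rewrite mulmxBl ucompB; split => //.
have -> : vcomp (m k *m M - m j *m M) - ((k%:R - j%:R) * A) *: v0 =
    vcomp (m k *m M - y k) - vcomp (m j *m M - y j).
  by apply/matrixP => a b; rewrite !mxE !liftK !mxE (ord1 a); ring.
apply: le_lt_trans (enormD _ _) _; rewrite enormN.
have := enorm_vcomp_le (mS k); have := enorm_vcomp_le (mS j).
have : A * c <= (k%:R - j%:R) * A * c by rewrite ler_pM2r // ler_peMl // ltW.
lra.
Qed.

Lemma l1norm_coef_le n (M M' : 'M[R]_n) (m : 'rV[R]_n) B r :
  M \in unitmx -> (forall i j, `|M' i j - M i j| < r) ->
  (forall j, `|(m *m M') 0 j| <= B) ->
  n%:R * n%:R * mxl1norm (invmx M) * r <= 1 / 2 ->
  l1norm m <= 2 * (n%:R * n%:R * mxl1norm (invmx M) * B).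
Proof.
move=> Mu MM' mB small; set K := n%:R * n%:R * mxl1norm (invmx M).
have mM_le : l1norm (m *m M) <= n%:R * B + n%:R * (l1norm m * r).
  have := l1normD (m *m M') (m *m M - m *m M'); rewrite addrC subrK => /le_trans; apply.
  apply: lerD; first exact: l1norm_le.
  by apply: l1norm_le; apply: row_mulmx_perturb => i j; rewrite distrC.
have m_le : l1norm m <= n%:R * (l1norm (m *m M) * mxl1norm (invmx M)).
  apply: l1norm_le => j; have -> : m 0 j = (m *m M *m invmx M) 0 j by rewrite mulmxK.
  exact/mulmx_entry_le/entry_le_mxl1norm.
have K0 : 0 <= K by rewrite !mulr_ge0 ?mxl1norm_ge0.
have : l1norm m <= K * B + (K * r) * l1norm m.
  apply: le_trans m_le _; rewrite /K.
  have := ler_wpM2r (mxl1norm_ge0 (invmx M)) mM_le => /(ler_wpM2l (ler0n R n)).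
  by move/le_trans; apply; rewrite le_eqVlt; apply/orP; left; apply/eqP; ring.
have : (K * r) * l1norm m <= 1 / 2 * l1norm m by apply: ler_wpM2r; rewrite ?l1norm_ge0.
lra.
Qed.

Lemma near_bounded_intvec (P : 'rV[R]_d.+1 -> R -> Prop) (N : nat) :
  (forall m, intvec m -> l1norm m <= N%:R -> \forall r \near 0^'+, P m r) ->
  \forall r \near 0^'+, forall m, intvec m -> l1norm m <= N%:R -> P m r.
Proof.
move=> Pnear.
pose T := {ffun 'I_d.+1 -> 'I_(N + N).+1}.
pose vec (k : T) : 'rV[R]_d.+1 := \row_i ((k i)%:R - N%:R).
have vec_onto m : intvec m -> l1norm m <= N%:R -> exists k, vec k = m.
  move=> mZ mN.
  have coord i : exists z : int, m 0 i = z%:~R /\ - N%:Z <= z <= N%:Z.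
    have mzi := floorK (mZ i); set zi := Num.floor (m 0 i) in mzi *.
    exists zi; split; first by rewrite mzi.
    have := le_trans (coord_le_l1norm m i) mN; rewrite -mzi.
    by rewrite -intr_norm -[N%:R]/((N%:Z)%:~R) ler_int ler_norml.
  have [z zP] := choice coord.
  exists [ffun i => inord (absz (z i + N%:Z))]; apply/matrixP => a i; rewrite (ord1 a).
  have [-> /andP[z_lo z_hi]] := zP i.
  rewrite !mxE ffunE inordK; last by lia.
  by rewrite natr_absz ger0_norm; [rewrite intrD addrK | lia].
have near_vec : \forall r \near 0^'+, forall k : T,
    intvec (vec k) -> l1norm (vec k) <= N%:R -> P (vec k) r.
  apply: filter_forall => k.
  have [[kZ kN]|not_in] := pselect (intvec (vec k) /\ l1norm (vec k) <= N%:R).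
    by apply: filterS (Pnear _ kZ kN) => r Pr _ _.
  by apply: filterE => r kZ kN; case: not_in.
apply: filterS near_vec => r Pr m mZ mN.
by have [k km] := vec_onto m mZ mN; rewrite -km in mZ mN *; exact: Pr.
Qed.

End LatticePoints.

Section UpperBound.
Variables (R : realType) (d : nat) (D : set 'rV[R]_d).

Lemma FD_le M t x : QD D M t x -> FD D (M, t) <= enorm (vcomp x).
Proof. by move=> Qx; apply: ge_inf; [exists 0 => _ [y _ <-]; exact: enorm_ge0 | exists x]. Qed.

Variables (v0 : 'rV[R]_d) (c : R).
Hypotheses (v0_sphere : sphere v0) (c_gt0 : 0 < c) (c_le1 : c <= 1).
Hypothesis cap_sub : forall w, sphere w -> enorm (w - v0) < 2 * c -> D w.

Lemma QD_near p : X p ->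
  exists K, \forall q \near p, exists2 x, QD D q.1 q.2 x & enorm (vcomp x) < K.
Proof.
case: p => M t Xp; have Mu := X_unit Xp; have [_ /andP[t0 t1]] := Xp.
set del := Num.min t (1 - t).
have del0 : 0 < del by rewrite lt_min t0 subr_gt0.
have [del_t del_1t] : del <= t /\ del <= 1 - t by split; rewrite ge_min lexx ?orbT.
have [m mZ [l l0 [u_small v_near]]] := lattice_point_near_ray v0 Mu del0 c_gt0.
set x := m *m M in u_small v_near.
exists (l * c + l); apply: near_point_entries; near=> r => -[M' t'] /= MM' tt'.
set x' := m *m M'.
have dx := row_mulmx_perturb m MM'.
have u_close : `|ucomp x' - ucomp x| <= l1norm m * r by rewrite -ucompB; exact: dx.
have v_close : enorm (vcomp x' - vcomp x) <= d%:R * (l1norm m * r).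
  by rewrite -vcompB; exact: enorm_vcomp_le.
have r_u : (l1norm m + 1) * r < del - `|ucomp x|.
  by near: r; apply: near0_mulr_lt; rewrite subr_gt0.
have r_v : d%:R * l1norm m * r < l * c - enorm (vcomp x - l *: v0).
  by near: r; apply: near0_mulr_lt; rewrite subr_gt0.
have v'_near : enorm (vcomp x' - l *: v0) < l * c.
  have -> : vcomp x' - l *: v0 = (vcomp x' - vcomp x) + (vcomp x - l *: v0).
    by rewrite addrA subrK.
  by apply: le_lt_trans (enormD _ _) _; rewrite mulrA in v_close; lra.
have u_range : - t' < ucomp x' < 1 - t'.
  have /andP[ux_lo ux_hi] : - `|ucomp x| <= ucomp x <= `|ucomp x| by rewrite -ler_norml.
  move: u_close tt'; rewrite ler_norml ltr_norml => /andP[ux'_lo ux'_hi] /andP[t_lo t_hi].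
  by apply/andP; split; lra.
have Qx' : QD D M' t' x' by split; [exists m | split; last exact: cone_near_ray v'_near].
exists x' => //; have := enormD (vcomp x' - l *: v0) (l *: v0).
by rewrite subrK enormZ v0_sphere mulr1 gtr0_norm //; lra.
Unshelve. all: by end_near.
Qed.

Lemma QD_nonempty p : X p -> exists x, QD D p.1 p.2 x.
Proof. by move=> Xp; have [K /nbhs_singleton [x Qx _]] := QD_near Xp; exists x. Qed.

Lemma FD_locally_bounded p : X p -> exists K, \forall q \near p, FD D q < K.
Proof.
move=> Xp; have [K QK] := QD_near Xp; exists K.
by apply: filterS QK => -[M t] [x Qx xK]; exact: le_lt_trans (FD_le Qx) xK.
Qed.

Lemma FD_bounded_on_qcompact C : qcompact C ->
  exists2 kappa, 0 < kappa & forall p, C p -> FD D p < kappa.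
Proof.
move=> Cc; have [K FK] := qcompact_ub Cc (@FD_Gamma_invariant R d D) FD_locally_bounded.
exists (`|K| + 1) => [|p /FK FpK]; first by rewrite ltr_wpDl.
by apply: lt_le_trans FpK _; apply: le_trans (ler_norm K) _; rewrite lerDl.
Qed.

End UpperBound.

Section Continuity.
Variables (R : realType) (d : nat) (D : set 'rV[R]_d).
Hypothesis D_sphere : D `<=` @sphere R d.

Lemma slab_QD r M t x : lattice M x -> slab r t D x -> QD D M t x.
Proof. by move=> Lx [ux /trunc_cone_sub_cone vx]. Qed.

Lemma QD_slab r M t x : QD D M t x -> enorm (vcomp x) <= r -> slab r t D x.
Proof. by move=> [_ [ux vx]] vr; split => //; exact: cone_trunc_cone. Qed.

Lemma QD_neq0 M t x : QD D M t x -> x != 0.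
Proof. by move=> [_ [_ /(cone_neq0 D_sphere)]]; apply: contraNneq => ->; rewrite vcomp0. Qed.

Variables (kappa : R) (M : 'M[R]_d.+1) (t : R).
Hypotheses (Xp : X (M, t)) (FD_lt : FD D (M, t) < kappa).
Hypothesis no_boundary :
  forall x, lattice M x -> x != 0 -> ~ boundary (slab kappa t D) x.
Local Notation f := (FD D (M, t)).

Lemma lattice_separation (N : nat) : \forall rho \near 0^'+, forall m, intvec m ->
  l1norm m <= N%:R -> m != 0 ->
  ball (m *m M) rho `<=` slab kappa t D \/ ball (m *m M) rho `<=` ~` slab kappa t D.
Proof.
apply: near_bounded_intvec => m mZ _; have [->|m0] := eqVneq m 0.
  by apply: filterE => r /negP[].
have mM0 : m *m M != 0.
  by apply: contraNneq m0 => mM0; apply/eqP; rewrite -(mulmxK (X_unit Xp) m) mM0 mul0mx.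
case: (not_boundary_near (no_boundary (ex_intro2 _ _ m mZ erefl) mM0)) => /near0_ball_sub.
  by apply: filterS => r ? _; left.
by apply: filterS => r ? _; right.
Qed.

Lemma QD_norm_lower_near (e : R) : 0 < e ->
  \forall q \near (M, t), forall y, QD D q.1 q.2 y -> f - e <= enorm (vcomp y).
Proof.
move=> e0; have Mu := X_unit Xp; have [_ /andP[t0 t1]] := Xp.
set K := d.+1%:R * d.+1%:R * mxl1norm (invmx M).
set N := Num.truncn (2 * (K * (kappa + 3))).
have [rho [rho0 sep]] := filter_ex (filterI (nbhs_right_gt 0) (lattice_separation N.+1)).
apply: near_point_entries; near=> r => -[M' t'] /= MM' tt' y Qy.
rewrite leNgt; apply/negP => y_small.
have Qy' := Qy; case: Qy' => [[m mZ yE] [uy vy]].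
have m0 : m != 0 by apply: contraTneq (QD_neq0 Qy) => m0; rewrite -yE m0 mul0mx eqxx.
have y_kappa : enorm (vcomp y) < kappa.
  by apply: lt_trans y_small (lt_trans _ FD_lt); rewrite ltrBlDr ltrDl.
have yB j : `|y 0 j| <= kappa + 3.
  have r1 : r < 1 by near: r; exact/nbhs_right_lt/ltr01.
  have := ler_normD t (t' - t); rewrite subrKC (gtr0_norm t0) => t'_le.
  by have := coord_le_strip j uy; lra.
have m_le : l1norm m <= N.+1%:R.
  apply: le_trans (l1norm_coef_le Mu MM' _ _) (ltW (truncnS_gt _)).
    by move=> j; rewrite yE; exact: yB.
  by apply: ltW; near: r; apply: near0_mulr_lt; rewrite divr_gt0.
have mM_y j : `|(m *m M - y) 0 j| <= l1norm m * r.
  by rewrite -yE; apply: row_mulmx_perturb => i k; rewrite distrC; exact: MM'.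
set z := y + uv_row (t' - t) 0.
have z_slab : slab kappa t D z by apply/slab_shift; exact: QD_slab Qy (ltW y_kappa).
have z_ball : ball (m *m M) rho z.
  apply/ball_rowP; split => // j; apply: le_lt_trans (coord_dist_shift _ _ _ _) _.
  have : l1norm m * r <= N.+1%:R * r by rewrite ler_wpM2r // ltW.
  have : (N.+1%:R + 1) * r < rho by near: r; exact: near0_mulr_lt.
  by have := mM_y j; lra.
case: (sep m mZ m_le m0) => [in_slab | out_slab]; last exact: out_slab _ z_ball z_slab.
have mM_Q : QD D M t (m *m M).
  exact: slab_QD (ex_intro2 _ _ m mZ erefl) (in_slab _ (ballxx _ rho0)).
have mM_le : enorm (vcomp (m *m M)) <= enorm (vcomp y) + d%:R * (l1norm m * r).
  have -> : vcomp (m *m M) = vcomp y + vcomp (m *m M - y) by rewrite vcompB addrC subrK.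
  by apply: le_trans (enormD _ _) _; rewrite lerD2l; exact: enorm_vcomp_le.
have : d%:R * (l1norm m * r) <= d%:R * (N.+1%:R * r) by rewrite ler_wpM2l // ler_wpM2r // ltW.
have : d%:R * (N.+1%:R * r) < e by rewrite mulrA; near: r; exact: near0_mulr_lt.
have := FD_le mM_Q; lra.
Unshelve. all: by end_near.
Qed.

Variables (v0 : 'rV[R]_d) (c : R).
Hypotheses (v0_sphere : sphere v0) (c_gt0 : 0 < c) (c_le1 : c <= 1).
Hypothesis cap_sub : forall w, sphere w -> enorm (w - v0) < 2 * c -> D w.

Lemma FD_upper_near (e : R) : 0 < e -> \forall q \near (M, t), FD D q < f + e.
Proof.
move=> e0; have [x0 Qx0] := QD_nonempty v0_sphere c_gt0 c_le1 cap_sub Xp.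
set e1 := Num.min e (kappa - f).
have e1_gt0 : 0 < e1 by rewrite lt_min e0 subr_gt0.
have [e1_e e1_k] : e1 <= e /\ e1 <= kappa - f by split; rewrite ge_min lexx ?orbT.
have QM_ne : [set enorm (vcomp y) | y in QD D M t] !=set0 by exists (enorm (vcomp x0)), x0.
have f_lt : f < f + e1 by rewrite ltrDl.
have [_ [x Qx <-] x_lt] := inf_lt QM_ne f_lt.
have x_kappa : enorm (vcomp x) <= kappa by lra.
have x_slab := QD_slab Qx x_kappa.
have [[m mZ xE] _] := Qx.
have [rho rho0 ball_sub] : exists2 rho : R, 0 < rho & ball x rho `<=` slab kappa t D.
  case: (not_boundary_near (no_boundary (ex_intro2 _ _ m mZ xE) (QD_neq0 Qx))).
    by move/nbhs_ballP.
  by move/nbhs_singleton/(_ x_slab).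
apply: near_point_entries; near=> r => -[M' t'] /= MM' tt'.
set x' := m *m M'.
have dx j : `|(x - x') 0 j| <= l1norm m * r.
  by rewrite -xE; apply: row_mulmx_perturb => i k; rewrite distrC; exact: MM'.
have z_ball : ball x rho (x' + uv_row (t' - t) 0).
  apply/ball_rowP; split => // j; apply: le_lt_trans (coord_dist_shift _ _ _ _) _.
  have : (l1norm m + 1) * r < rho by near: r; exact: near0_mulr_lt.
  by have := dx j; lra.
have Qx' : QD D M' t' x' by apply: (slab_QD (r := kappa)); [exists m | exact/slab_shift/ball_sub].
apply: le_lt_trans (FD_le Qx') _.
have : enorm (vcomp x') <= enorm (vcomp x) + d%:R * (l1norm m * r).
  have -> : vcomp x' = vcomp x - vcomp (x - x') by rewrite vcompB opprB addrC subrK.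
  by apply: le_trans (enormD _ _) _; rewrite enormN lerD2l; exact: enorm_vcomp_le.
have : d%:R * (l1norm m * r) < f + e - enorm (vcomp x).
  by rewrite mulrA; near: r; apply: near0_mulr_lt; lra.
lra.
Unshelve. all: by end_near.
Qed.

Lemma FD_continuous_near (e : R) : 0 < e -> \forall q \near (M, t), `|FD D q - f| < e.
Proof.
move=> e0; have [K QK] := QD_near v0_sphere c_gt0 c_le1 cap_sub Xp.
have e2 : 0 < e / 2 by rewrite divr_gt0.
near=> q.
have up : FD D q < f + e by near: q; exact: FD_upper_near.
(* [FD D q] is an infimum, which is 0 on the empty set: the lower bound needs a
   point of [QD D q.1 q.2]. *)
have low : f - e / 2 <= FD D q.
  have [x Qx _] : exists2 x, QD D q.1 q.2 x & enorm (vcomp x) < K by near: q; exact: QK.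
  have lowQ : forall y, QD D q.1 q.2 y -> f - e / 2 <= enorm (vcomp y).
    by near: q; exact: QD_norm_lower_near.
  by apply: lb_le_inf; [exists (enorm (vcomp x)), x | move=> _ [y Qy <-]; exact: lowQ].
by rewrite ltr_norml; apply/andP; split; lra.
Unshelve. all: by end_near.
Qed.

End Continuity.

Unset Implicit Arguments.

Theorem proposition7p1 (R : realType) (d : nat) (D : set 'rV[R]_d)
    (C : set ('M[R]_(d.+1) * R)) :
  (2 <= d)%N ->
  D `<=` @sphere R d ->
  nonempty_sphere_interior D ->
  qcompact C ->
  exists2 kappa : R, 0 < kappa &
    (forall p, C p -> FD D p < kappa) /\
    (forall p, C p ->
       (forall x, lattice p.1 x -> x != 0 ->
          ~ boundary (slab kappa p.2 D) x) ->
       qcontinuous_at (FD D) p).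
Proof.
move=> _ D_sphere [v0 [Dv0 [e0 e0_gt0 cap]]] Cc.
set c := Num.min e0 1 / 2.
have c_gt0 : 0 < c by rewrite divr_gt0 // lt_min e0_gt0 ltr01.
have [min_e0 min_1] : Num.min e0 1 <= e0 /\ Num.min e0 1 <= 1.
  by split; rewrite ge_min lexx ?orbT.
have c_le1 : c <= 1 by rewrite /c; lra.
have cap_sub w : sphere w -> enorm (w - v0) < 2 * c -> D w.
  by move=> Sw wv0; apply: cap => //; rewrite /c in wv0; lra.
have v0_sphere := D_sphere _ Dv0.
have [kappa kappa_gt0 FD_lt] := FD_bounded_on_qcompact v0_sphere c_gt0 c_le1 cap_sub Cc.
exists kappa => //; split => // -[M t] Cp no_boundary.
have Xp := Cc.1.1 _ Cp.
apply: (qcontinuous_at_near Xp (FD_Gamma_invariant D)).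
exact: (FD_continuous_near D_sphere Xp (FD_lt _ Cp) no_boundary v0_sphere c_gt0 c_le1 cap_sub).
Qed.
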